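(* Let $\mathbb M=(M,d)$ be an unbounded metric space whose group of isometries $\mathrm{Aut}(\mathbb M)$ acts transitively on $M$. Suppose that for some $t\in\mathbb{R}_+^*$ the set $\mathrm{spec}(\mathbb M)\cap[t,+\infty)$ is uncountable and every bounded subspace of $\mathbb M$ is $t$-totally bounded. Then $$\mathrm{age}_t(\mathbb M):=\{\text{isometry type of }\mathbb M_{\restriction X}: X\subseteq M\text{ finite},\ d(\mathbb M_{\restriction X})\ge t\}$$ is an ideal contained in $\mathrm{age}(\mathbb M)$ which is not representable.
   Context: For a metric space $\mathbb M=(M,d)$: $\mathrm{spec}(\mathbb M)=\{d(x,y):x,y\in M\}$; $d(\mathbb M):=\inf(\mathrm{spec}(\mathbb M)\setminus\{0\})$, with $d(\mathbb M)=+\infty$ if $|M|\le 1$; $\mathbb M_{\restriction X}$ is the subspace on $X$. $\omega_t(\mathbb M):=\sup\{|X|:X\subseteq M,\ d(\mathbb M_{\restriction X})\ge t\}$, and $\mathbb M$ is $t$-totally bounded if $\omega_t(\mathbb M)$ is finite. Finite metric spaces are considered up to isometry and ordered by isometric embeddability; $\mathrm{age}(\mathbb M)$ is the set of isometry types of finite subspaces of $\mathbb M$. An ideal is a non-empty, downward closed, up-directed set of such isometry types; it is representable if it equals $\mathrm{age}(\mathbb M')$ for some metric space $\mathbb M'$. *)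

From Stdlib Require Import Reals List.
From mathcomp Require Import ssreflect ssrfun ssrbool eqtype ssrnat seq fintype.
Local Open Scope R_scope.
Set Implicit Arguments.
Unset Strict Implicit.
Unset Printing Implicit Defensive.

Definition is_metric (T : Type) (d : T -> T -> R) : Prop :=
  (forall x y, d x y = 0 <-> x = y) /\
  (forall x y, d x y = d y x) /\
  (forall x y z, (d x z <= d x y + d y z)).

Definition spec (T : Type) (d : T -> T -> R) : R -> Prop :=
  fun r => exists x y, d x y = r.

Definition unbounded (T : Type) (d : T -> T -> R) : Prop :=
  forall r : R, exists x y, (r < d x y).

Definition is_auto (T : Type) (d : T -> T -> R) (f : T -> T) : Prop :=
  bijective f /\ forall x y, d (f x) (f y) = d x y.

Definition aut_transitive (T : Type) (d : T -> T -> R) : Prop :=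
  forall x y : T, exists f, is_auto d f /\ f x = y.

Definition countable_set (A : R -> Prop) : Prop :=
  exists g : R -> nat, forall a b, A a -> A b -> g a = g b -> a = b.

Definition bounded_subset (T : Type) (d : T -> T -> R) (X : T -> Prop) : Prop :=
  exists r : R, forall x y, X x -> X y -> (d x y <= r).

(* d(M|X) >= t, for a finite X given as a duplicate-free list:
   every two distinct points are at distance >= t (the infimum of nonzero
   distances is >= t; vacuous if |X| <= 1 since then d = +oo). *)
Definition separated (T : Type) (d : T -> T -> R) (t : R) (l : list T) : Prop :=
  forall x y, In x l -> In y l -> x <> y -> (t <= d x y).

(* omega_t(M|X) is finite: a uniform bound on the size of t-separated
   subsets of X (an infinite t-separated subset would have finite
   t-separated subsets of every size). *)
Definition t_totally_bounded (T : Type) (d : T -> T -> R) (t : R) (X : T -> Prop) : Prop :=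
  exists N : nat, forall l : list T, NoDup l -> (forall x, In x l -> X x) ->
    separated d t l -> (length l <= N)%coq_nat.

Record finms := FinMS {
  fsize : nat;
  fdist : 'I_fsize -> 'I_fsize -> R;
  fmetric : is_metric fdist }.

Definition embeds_in (A : finms) (T : Type) (d : T -> T -> R) : Prop :=
  exists f : 'I_(fsize A) -> T, injective f /\
    forall i j, d (f i) (f j) = fdist i j.

Definition emb (A B : finms) : Prop := embeds_in A (@fdist B).

Definition isom (A B : finms) : Prop :=
  exists f : 'I_(fsize A) -> 'I_(fsize B), bijective f /\
    forall i j, fdist (f i) (f j) = fdist i j.

(* A class of isometry types, as an isometry-invariant predicate on finms. *)
Definition iso_invariant (P : finms -> Prop) : Prop :=
  forall A B, isom A B -> P A -> P B.

Definition ideal (P : finms -> Prop) : Prop :=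
  iso_invariant P /\
  (exists A, P A) /\
  (forall A B, emb A B -> P B -> P A) /\
  (forall A B, P A -> P B -> exists C, P C /\ emb A C /\ emb B C).

Definition age (T : Type) (d : T -> T -> R) : finms -> Prop :=
  fun A => embeds_in A d.

Definition age_t (T : Type) (d : T -> T -> R) (t : R) : finms -> Prop :=
  fun A => embeds_in A d /\
    forall i j : 'I_(fsize A), i <> j -> (t <= fdist i j).

Definition representable (P : finms -> Prop) : Prop :=
  exists (T' : Type) (d' : T' -> T' -> R), is_metric d' /\
    forall A, P A <-> age d' A.

From Stdlib Require Import Reals List Lra Lia Classical ClassicalEpsilon FinFun Cantor.
From mathcomp Require Import ssreflect ssrfun ssrbool eqtype ssrnat seq fintype zify.
Local Open Scope R_scope.
Set Implicit Arguments.
Unset Strict Implicit.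

(* age_t(M) is directed because any two finite t-separated subspaces can be
   realised far apart: an isometry moves a copy of the second one beyond the
   diameter of the first (transitivity and unboundedness).  If age_t(M) were
   age(M'), every finite subset of a ball of M' would be t-separated and embed
   into M, where an isometry moves it into a fixed ball; as bounded sets are
   t-totally bounded, the balls of M' are finite.  Then M' is countable, hence so
   is spec(M'), which contains spec(M) ∩ [t, +oo) because every pair of points
   at distance at least t belongs to age_t(M). *)

Lemma In_mem (A : eqType) (x : A) (s : seq A) : In x s -> x \in s.
Proof. by elim: s => //= y s IH [-> | /IH Hx]; rewrite inE ?eqxx ?Hx ?orbT. Qed.

Lemma uniq_NoDup (A : eqType) (s : seq A) : uniq s -> NoDup s.
Proof.
elim: s => [|x s IH] /=; first by constructor.
by case/andP => /negP Hx /IH Hs; constructor => // /In_mem.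
Qed.

Lemma length_size (A : Type) (s : list A) : length s = size s.
Proof. by elim: s => //= x s ->. Qed.

Definition lnth (A : Type) (x0 : A) (l : list A) (i : 'I_(length l)) : A :=
  List.nth i l x0.
Arguments lnth {A} x0 l i.

Lemma lnth_inj (A : Type) (x0 : A) (l : list A) : NoDup l -> injective (lnth x0 l).
Proof. by move=> /(NoDup_nth l x0) Hl i j Eij; apply: ord_inj; apply: Hl Eij; apply/ltP. Qed.
Arguments lnth_inj {A} x0 {l}.

Lemma lnth_In (A : Type) (x0 : A) (l : list A) (i : 'I_(length l)) : In (lnth x0 l i) l.
Proof. by apply: nth_In; apply/ltP. Qed.

Lemma NoDup_bounded_cover (A : Type) (P : A -> Prop) (K : nat) :
  (forall l, NoDup l -> (forall y, In y l -> P y) -> (length l <= K)%coq_nat) ->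
  exists l, forall y, P y -> In y l.
Proof.
move=> HK.
have grow l0 : NoDup l0 -> (forall y, In y l0 -> P y) ->
    (exists l, forall y, P y -> In y l) \/
    exists y, NoDup (y :: l0) /\ forall z, In z (y :: l0) -> P z.
  move=> Hl0 Pl0; case: (classic (forall y, P y -> In y l0)) => [Hcov | ].
    by left; exists l0.
  move=> /not_all_ex_not [y /(imply_to_and (P y)) [Py Hy]]; right; exists y.
  by split; [constructor | move=> z [<- | /Pl0]].
suff cover k l0 : NoDup l0 -> (forall y, In y l0 -> P y) ->
    (K <= length l0 + k)%N -> exists l, forall y, P y -> In y l.
  by apply: (cover K nil) => //; constructor.
elim: k l0 => [|k IHk] l0 Hl0 Pl0 Hk;
  case: (grow l0 Hl0 Pl0) => [// | [y [Hyl0 Pyl0]]].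
- by have /= := HK _ Hyl0 Pyl0; lia.
- by apply: IHk Hyl0 Pyl0 _ => /=; lia.
Qed.

Lemma countable_of_finite_layers (A : Type) (B : nat -> A -> Prop) :
  (forall y, exists k, B k y) -> (forall k, exists l, forall y, B k y -> In y l) ->
  exists c : A -> nat, injective c.
Proof.
move=> HB /choice [L HL].
have /choice [pos Hpos] : forall y, exists p : nat * nat, nth_error (L p.1) p.2 = Some y.
  move=> y; have [k Hk] := HB y; have [i Hi] := In_nth_error _ _ (HL k y Hk).
  by exists (k, i).
exists (fun y => Cantor.to_nat (pos y)) => y1 y2 /(can_inj Cantor.cancel_of_to) E.
by move: (Hpos y1) (Hpos y2); rewrite E => -> [].
Qed.

Lemma countable_sub_spec (U : Type) (dU : U -> U -> R) (c : U -> nat) (A : R -> Prop) :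
  injective c -> (forall r, A r -> spec dU r) -> countable_set A.
Proof.
move=> Hc HA.
pose code (p : U * U) := Cantor.to_nat (c p.1, c p.2).
have code_inj : injective code.
  by move=> [x1 y1] [x2 y2] /(can_inj Cantor.cancel_of_to) [/Hc -> /Hc ->].
have [h Hh] : exists h : R -> nat, forall r, A r -> exists p, code p = h r /\ dU p.1 p.2 = r.
  apply: (choice (fun r n => A r -> exists p, code p = n /\ dU p.1 p.2 = r)) => r.
  case: (classic (A r)) => [/HA [x [y Hxy]] | NA]; last by exists 0%nat.
  by exists (code (x, y)) => _; exists (x, y).
by exists h => r1 r2 /Hh [p1 [<- <-]] /Hh [p2 [<- <-]] /code_inj ->.
Qed.

Lemma finite_ub (I : finType) (h : I -> R) : exists M, forall i, h i <= M.
Proof.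
suff [M HM] : exists M, forall i, i \in enum I -> h i <= M.
  by exists M => i; apply: HM; rewrite mem_enum.
elim: (enum I) => [|i s [M HM]]; first by exists 0.
exists (Rmax (h i) M) => j; rewrite inE => /orP [/eqP -> | /HM HjM].
- exact: Rmax_l.
- exact: Rle_trans HjM (Rmax_r _ _).
Qed.

Section MetricSpace.
Variables (T : Type) (d : T -> T -> R).
Hypothesis d_metric : is_metric d.

Lemma dist_sym x y : d x y = d y x.
Proof. by case: d_metric => _ []. Qed.

Lemma dist_triangle x y z : d x z <= d x y + d y z.
Proof. by case: d_metric => _ []. Qed.

Lemma dist_pos_neq x y : 0 < d x y -> x <> y.
Proof. by case: d_metric => H0 _ Hxy Exy; move: Hxy; rewrite (proj2 (H0 x y) Exy); lra. Qed.

Lemma ball_diam x y z k : d x y <= k -> d x z <= k -> d y z <= 2 * k.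
Proof. by have := dist_triangle y x z; rewrite (dist_sym y x); lra. Qed.

Lemma ball_bounded x k : bounded_subset d (fun z => d x z <= k).
Proof. by exists (2 * k) => y z; apply: ball_diam. Qed.

Lemma far_point p r : unbounded d -> exists z, r < d p z.
Proof.
move=> Hu; have [x [y Hxy]] := Hu (2 * r).
have := dist_triangle x p y; rewrite (dist_sym x p) => Hxpy.
by case: (Rlt_or_le r (d p x)) => Hpx; [exists x | exists y; lra].
Qed.

Lemma is_metric_inj (A : Type) (f : A -> T) :
  injective f -> is_metric (fun a b => d (f a) (f b)).
Proof.
case: d_metric => [H0 [Hs Ht]] Hf; split; [|split] => // a b.
by split => [/H0 /Hf | ->]; last exact/H0.
Qed.

Definition induced_fms n (f : 'I_n -> T) (Hf : injective f) : finms :=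
  FinMS (is_metric_inj Hf).

Lemma induced_embeds n (f : 'I_n -> T) (Hf : injective f) :
  embeds_in (induced_fms Hf) d.
Proof. by exists f. Qed.

Lemma age_t_induced t n (f : 'I_n -> T) (Hf : injective f) :
  (forall i j, i <> j -> t <= d (f i) (f j)) -> age_t d t (induced_fms Hf).
Proof. by move=> Hsep; split; [exact: induced_embeds | exact: Hsep]. Qed.

Definition list_fms (x0 : T) (l : list T) (Hl : NoDup l) : finms :=
  induced_fms (lnth_inj x0 Hl).

Lemma age_t_list t x0 l (Hl : NoDup l) : separated d t l -> age_t d t (list_fms x0 Hl).
Proof.
move=> Hsep; apply: age_t_induced => i j Hij.
by apply: Hsep; [exact: lnth_In | exact: lnth_In | move/(lnth_inj x0 Hl)].
Qed.

Lemma age_t_inhabited t (x : T) : exists A, age_t d t A.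
Proof.
have Hx : NoDup [:: x] by constructor; [exact: List.in_nil | constructor].
by exists (list_fms x Hx); apply: age_t_list => y z [<- | []] [<- | []].
Qed.

Lemma separated_pair t x y : t <= d x y -> separated d t [:: x; y].
Proof.
move=> Hxy u v [<- | [<- | []]] [<- | [<- | []]] Huv //; try by case: Huv.
by rewrite dist_sym.
Qed.

Lemma age_t_iso t : iso_invariant (age_t d t).
Proof.
move=> A B [f [[f' fK f'K] Hf]] [[g [Hg Hgd]] Hsep]; split.
- exists (fun i => g (f' i)); split; first exact: inj_comp Hg (can_inj f'K).
  by move=> i j; rewrite Hgd -Hf !f'K.
- move=> i j Hij; rewrite -(f'K i) -(f'K j) Hf.
  by apply: Hsep => /(congr1 f); rewrite !f'K.
Qed.

Lemma age_t_down t A B : emb A B -> age_t d t B -> age_t d t A.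
Proof.
move=> [f [Hf Hfd]] [[g [Hg Hgd]] Hsep]; split.
- exists (fun i => g (f i)); split; first exact: inj_comp Hg Hf.
  by move=> i j; rewrite Hgd Hfd.
- by move=> i j Hij; rewrite -Hfd; apply: Hsep => /Hf.
Qed.

Lemma far_translate m n (f : 'I_m -> T) (g : 'I_n -> T) r :
  unbounded d -> aut_transitive d ->
  exists phi, is_auto d phi /\ forall i j, r < d (f i) (phi (g j)).
Proof.
move=> Hu Htr; have [p _] := Hu 0.
have [Mf HMf] := finite_ub (fun i => d p (f i)).
have [Mg HMg] := finite_ub (fun j => d p (g j)).
have [z Hz] := far_point p (Mf + Mg + r) Hu.
have [phi [[Hphi Hiso] Hpz]] := Htr p z.
exists phi; split => // i j.
have Hgz : d (phi (g j)) z = d p (g j) by rewrite -Hpz Hiso dist_sym.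
have := dist_triangle p (f i) z; have := dist_triangle (f i) (phi (g j)) z.
by have := HMf i; have := HMg j; rewrite /= Hgz; lra.
Qed.

Definition glue (m n : nat) (f : 'I_m -> T) (g : 'I_n -> T) (k : 'I_(m + n)) : T :=
  match split k with inl i => f i | inr j => g j end.

Lemma glue_lshift m n (f : 'I_m -> T) (g : 'I_n -> T) i : glue f g (lshift n i) = f i.
Proof. by rewrite /glue (unsplitK (inl _ i)). Qed.

Lemma glue_rshift m n (f : 'I_m -> T) (g : 'I_n -> T) j : glue f g (rshift m j) = g j.
Proof. by rewrite /glue (unsplitK (inr _ j)). Qed.

Lemma glue_inj m n (f : 'I_m -> T) (g : 'I_n -> T) :
  injective f -> injective g -> (forall i j, f i <> g j) -> injective (glue f g).
Proof.
move=> Hf Hg Hfg k1 k2; rewrite /glue.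
case: (split_ordP k1) => [i1 | j1] ->; case: (split_ordP k2) => [i2 | j2] ->.
- by move/Hf ->.
- by move/Hfg.
- by move/esym/Hfg.
- by move/Hg ->.
Qed.

Lemma glue_separated t m n (f : 'I_m -> T) (g : 'I_n -> T) :
  (forall i j, i <> j -> t <= d (f i) (f j)) ->
  (forall i j, i <> j -> t <= d (g i) (g j)) ->
  (forall i j, t <= d (f i) (g j)) ->
  forall k1 k2, k1 <> k2 -> t <= d (glue f g k1) (glue f g k2).
Proof.
move=> Hf Hg Hfg k1 k2; rewrite /glue.
case: (split_ordP k1) => [i1 | j1] ->; case: (split_ordP k2) => [i2 | j2] -> Hk.
- by apply: Hf => Ei; apply: Hk; rewrite Ei.
- exact: Hfg.
- by rewrite dist_sym; apply: Hfg.
- by apply: Hg => Ej; apply: Hk; rewrite Ej.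
Qed.

Lemma age_t_directed t A B : unbounded d -> aut_transitive d -> 0 < t ->
  age_t d t A -> age_t d t B -> exists C, age_t d t C /\ emb A C /\ emb B C.
Proof.
move=> Hu Htr Ht [[f [Hf Hfd]] HA] [[g [Hg Hgd]] HB].
have [phi [[[phi' phiK _] Hphi] Hfar]] := far_translate f g t Hu Htr.
pose h j := phi (g j).
have Hh : injective h by apply: inj_comp Hg; exact: can_inj phiK.
have Hhd i j : d (h i) (h j) = fdist i j by rewrite /h Hphi Hgd.
have Hfh i j : f i <> h j by apply: dist_pos_neq; have := Hfar i j; rewrite /h; lra.
exists (induced_fms (glue_inj Hf Hh Hfh)); split; [|split].
- apply: age_t_induced; apply: glue_separated => i j.
  + by rewrite Hfd; apply: HA.
  + by rewrite Hhd; apply: HB.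
  + exact: Rlt_le (Hfar i j).
- exists (lshift _); split; first exact: lshift_inj.
  by move=> i j /=; rewrite !glue_lshift.
- exists (@rshift _ _); split; first exact: rshift_inj.
  by move=> i j /=; rewrite !glue_rshift.
Qed.

Lemma t_totally_bounded_family t (X : T -> Prop) : t_totally_bounded d t X ->
  exists N, forall n (f : 'I_n -> T), injective f -> (forall i, X (f i)) ->
    (forall i j, i <> j -> t <= d (f i) (f j)) -> (n <= N)%coq_nat.
Proof.
move=> [N HN]; exists N => n f Hf HX Hsep.
have <- : length (List.map f (enum 'I_n)) = n.
  by rewrite length_map length_size size_enum_ord.
apply: HN.
- exact: Injective_map_NoDup Hf (uniq_NoDup (enum_uniq _)).
- by move=> y /in_map_iff [i [<- _]].
- move=> y z /in_map_iff [i [<- _]] /in_map_iff [j [<- _]] Hyz.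
  by apply: Hsep => Eij; apply: Hyz; rewrite Eij.
Qed.

Lemma bounded_diam_family_size t k (x0 : T) : aut_transitive d ->
  (forall X, bounded_subset d X -> t_totally_bounded d t X) ->
  exists N, forall n (f : 'I_n -> T), injective f ->
    (forall i j, i <> j -> t <= d (f i) (f j)) -> (forall i j, d (f i) (f j) <= k) ->
    (n <= N)%coq_nat.
Proof.
move=> Htr Htb.
have [N HN] := t_totally_bounded_family (Htb _ (ball_bounded x0 k)).
exists N => -[|n] f Hf Hsep Hk; first exact: Nat.le_0_l.
have [phi [[[phi' phiK _] Hphi] Hx0]] := Htr (f ord0) x0.
apply: (HN _ (fun i => phi (f i))).
- by apply: inj_comp Hf; exact: can_inj phiK.
- by move=> i; rewrite -Hx0 Hphi.
- by move=> i j Hij; rewrite Hphi; apply: Hsep.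
Qed.

End MetricSpace.

Section NotRepresentable.
Variables (T : Type) (d : T -> T -> R) (t : R).
Hypotheses (d_metric : is_metric d) (t_pos : 0 < t) (d_trans : aut_transitive d).
Hypothesis d_tb : forall X, bounded_subset d X -> t_totally_bounded d t X.
Variables (T' : Type) (d' : T' -> T' -> R).
Hypotheses (d'_metric : is_metric d') (age_t_rep : forall A, age_t d t A <-> age d' A).

Lemma rep_spec_ge r : spec d r -> t <= r -> spec d' r.
Proof.
move=> [x [y <-]] Hxy.
have Hl : NoDup [:: x; y].
  have Hne : x <> y by apply: (dist_pos_neq d_metric); lra.
  by constructor; [move=> [/esym/Hne | []] | constructor; [exact: List.in_nil | constructor]].
have [g [_ Hg]] := (age_t_rep _).1 (age_t_list d_metric x Hl (separated_pair d_metric Hxy)).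
by exists (g ord0), (g ord_max); rewrite Hg.
Qed.

Lemma rep_ball_finite (x0 : T) (a : T') (k : R) :
  exists l, forall y, d' a y <= k -> In y l.
Proof.
have [N HN] := bounded_diam_family_size d_metric (2 * k) x0 d_trans d_tb.
apply: (@NoDup_bounded_cover _ _ N) => l Hl Hball.
have [[f [Hf Hfd]] Hsep] := (age_t_rep _).2 (induced_embeds d'_metric (lnth_inj a Hl)).
apply: (HN _ f Hf) => i j; rewrite Hfd; first exact: Hsep.
by apply: (ball_diam d'_metric); apply/Hball/lnth_In.
Qed.

Lemma rep_countable (x0 : T) (a : T') : exists c : T' -> nat, injective c.
Proof.
apply: (@countable_of_finite_layers _ (fun k y => d' a y <= INR k)).
- by move=> y; have [k Hk] := INR_archimed 1 (d' a y) Rlt_0_1; exists k; lra.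
- by move=> k; apply: rep_ball_finite x0 a (INR k).
Qed.

Lemma rep_spec_ge_countable : countable_set (fun r => spec d r /\ t <= r).
Proof.
case: (classic (exists r, spec d r /\ t <= r)) => [[r [Hr Htr]] | Hnone]; last first.
  by exists (fun _ => 0%nat) => r1 r2 H1; case: Hnone; exists r1.
have [x0 _] := Hr; have [a _] := rep_spec_ge Hr Htr.
have [c Hc] := rep_countable x0 a.
by apply: (countable_sub_spec Hc) => r' [Hr' Htr']; apply: rep_spec_ge.
Qed.

End NotRepresentable.

Theorem proposition1 (T : Type) (d : T -> T -> R) (t : R) :
  is_metric d ->
  unbounded d ->
  aut_transitive d ->
  (0 < t) ->
  ~ countable_set (fun r => spec d r /\ (t <= r)) ->
  (forall X : T -> Prop, bounded_subset d X -> t_totally_bounded d t X) ->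
  ideal (age_t d t) /\
  (forall A, age_t d t A -> age d A) /\
  ~ representable (age_t d t).
Proof.
move=> Hd Hu Htr Ht Hunc Htb; split; [|split].
- have [x0 _] := Hu 0.
  split; first exact: age_t_iso.
  split; first exact: age_t_inhabited Hd t x0.
  split; first by move=> A B; apply: age_t_down.
  by move=> A B; apply: age_t_directed.
- by move=> A [].
- move=> [T' [d' [Hd' Hrep]]]; apply: Hunc.
  exact: (rep_spec_ge_countable Hd Ht Htr Htb Hd' Hrep).
Qed.
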